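(* Let $G$ be a finite abelian group of order $n$, let $\hat G=\{\psi_1,\dots,\psi_n\}$ be its dual group, and for $\chi\in\hat G^n$ let $a_i$ be the number of coordinates of $\chi$ equal to $\psi_i$ (so $a_1+\cdots+a_n=n$). Let $H=H(\chi)=\frac1n\log\binom{n}{a_1,\dots,a_n}$. If $H\ge(\log n)^{-100}$ then \[ H=\Big(1+O\Big(\frac{\log\log n}{\log n}\Big)\Big)\sum_{i=1}^n\frac{a_i}{n}\log\frac{n}{a_i}, \] where terms with $a_i=0$ are interpreted as $0$ and the implied constant is absolute.
   Context: $\binom{n}{a_1,\dots,a_n}=\frac{n!}{a_1!\cdots a_n!}$ is the multinomial coefficient. *)

From mathcomp Require Import all_boot all_order all_algebra all_fingroup all_solvable all_field all_character.
From Stdlib Require Import Reals.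
Set Implicit Arguments. Unset Strict Implicit. Unset Printing Implicit Defensive.

(* The dual group of a finite abelian group G is represented by the
   irreducible (= linear, since G is abelian) characters irr G, indexed by
   Iirr G; for abelian G there are exactly #|G| of them. *)

Definition counts (gT : finGroupType) (G : {group gT}) (n : nat)
  (chi : 'I_n -> Iirr G) (i : Iirr G) : nat := #|[set j | chi j == i]|.

Definition multinom (gT : finGroupType) (G : {group gT}) (n : nat)
  (a : Iirr G -> nat) : nat := n`! %/ \prod_(i : Iirr G) (a i)`!.

Definition Hent (gT : finGroupType) (G : {group gT}) (n : nat)
  (chi : 'I_n -> Iirr G) : R :=
  (/ INR n * ln (INR (@multinom gT G n (counts chi))))%R.

Definition Sent (gT : finGroupType) (G : {group gT}) (n : nat)
  (chi : 'I_n -> Iirr G) : R :=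
  \big[Rplus/0%R]_(i : Iirr G)
     (if counts chi i == 0%N then 0%R
      else (INR (counts chi i) / INR n * ln (INR n / INR (counts chi i)))%R).

From mathcomp Require Import all_boot all_order all_algebra all_fingroup all_solvable all_field all_character.
From Stdlib Require Import Reals Lra.
From HB Require Import structures.

(* Let rho(m) = ln m! - (m ln m - m) be the remainder in Stirling's formula.
   Since a_1 + ... + a_n = n, the linear terms cancel and
   n (S - H) = sum_i rho(a_i) - rho(n), where S is the entropy sum.
   The binomial estimate C(m+k, m) m^m k^k <= (m+k)^(m+k) makes rho
   subadditive, whence H <= S.  Conversely rho is nondecreasing with
   rho(m) <= 1 + ln m; bounding rho(n) below by rho(a_max) leaves only indices
   with 2 a_i <= n, and for those ln n (1 + ln a_i) <= 8 a_i ln (n / a_i). *)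

(* Stdlib's Reals rebinds [^] in nat_scope to Nat.pow. *)
Local Notation "m ^ n" := (expn m n) : nat_scope.

Lemma prod_fact_dvd_fact_sum [I : Type] (r : seq I) (a : I -> nat) :
  \prod_(i <- r) (a i)`! %| (\sum_(i <- r) a i)`!.
Proof.
elim: r => [|i r IHr]; first by rewrite !big_nil.
rewrite !big_cons -(bin_fact (leq_addr (\sum_(j <- r) a j) (a i))) addKn.
by rewrite dvdn_mull // dvdn_mul.
Qed.

Lemma bin_mul_expn_le m k : 'C(m + k, m) * m ^ m * k ^ k <= (m + k) ^ (m + k).
Proof.
rewrite [in X in _ <= X ^ _]addnC expnDn.
have lt_m : m < (m + k).+1 by rewrite ltnS leq_addr.
rewrite (bigD1 (Ordinal lt_m)) //= addKn -mulnA (mulnC (m ^ m)).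
exact: leq_addr.
Qed.

Lemma double_le_sum_max (I : finType) (a : I -> nat) i j :
  (forall k, a k <= a j) -> i != j -> 2 * a i <= \sum_k a k.
Proof.
move=> max_j neq_ij; rewrite (bigD1 j) //= (bigD1 i neq_ij) /=.
by rewrite mul2n -addnn addnA (leq_trans _ (leq_addr _ _)) // leq_add2r.
Qed.

Open Scope R_scope.

Lemma INR_pos [m : nat] : (0 < m)%nat -> 0 < INR m.
Proof. by move=> m_gt0; apply/lt_0_INR/ltP. Qed.

Lemma INR_expn (m k : nat) : INR (m ^ k) = INR m ^ k.
Proof. by elim: k => [|k IHk]; rewrite ?expn0 // expnS mult_INR IHk. Qed.

Lemma ln_INR_expn (m k : nat) : (0 < m)%nat -> ln (INR (m ^ k)) = INR k * ln (INR m).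
Proof. by move=> m_gt0; rewrite INR_expn ln_pow //; apply: INR_pos. Qed.

Lemma RplusA : associative Rplus.
Proof. by move=> x y z; rewrite Rplus_assoc. Qed.

HB.instance Definition _ := Monoid.isComLaw.Build R 0 Rplus RplusA Rplus_comm Rplus_0_l.

Section RealSums.
Variables (I : Type) (r : seq I) (P : pred I).

Lemma Rmult_sumr c (F : I -> R) :
  c * \big[Rplus/0]_(i <- r | P i) F i = \big[Rplus/0]_(i <- r | P i) (c * F i).
Proof.
apply: (big_endo (fun x => c * x)); last exact: Rmult_0_r.
by move=> x y; rewrite Rmult_plus_distr_l.
Qed.

Lemma Rmult_suml c (F : I -> R) :
  \big[Rplus/0]_(i <- r | P i) F i * c = \big[Rplus/0]_(i <- r | P i) (F i * c).
Proof.
apply: (big_endo (fun x => x * c)); last exact: Rmult_0_l.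
by move=> x y; rewrite Rmult_plus_distr_r.
Qed.

Lemma sumRB (F G : I -> R) :
  \big[Rplus/0]_(i <- r | P i) (F i - G i) =
  \big[Rplus/0]_(i <- r | P i) F i - \big[Rplus/0]_(i <- r | P i) G i.
Proof.
rewrite /Rminus big_split /=; congr (_ + _).
by apply: esym; apply: (big_endo Ropp); [exact: Ropp_plus_distr | exact: Ropp_0].
Qed.

Lemma Rle_sum (F G : I -> R) : (forall i, P i -> F i <= G i) ->
  \big[Rplus/0]_(i <- r | P i) F i <= \big[Rplus/0]_(i <- r | P i) G i.
Proof.
move=> le_FG; apply: (big_ind2 Rle) => //; first exact: Rle_refl.
by move=> *; apply: Rplus_le_compat.
Qed.

Lemma INR_sum (a : I -> nat) :
  INR (\sum_(i <- r | P i) a i) = \big[Rplus/0]_(i <- r | P i) INR (a i).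
Proof. by apply: (big_morph INR) => //; exact: plus_INR. Qed.

Lemma ln_INR_prod (a : I -> nat) : (forall i, 0 < a i)%nat ->
  ln (INR (\prod_(i <- r | P i) a i)) = \big[Rplus/0]_(i <- r | P i) ln (INR (a i)).
Proof.
move=> a_gt0; elim: r => [|i s IHs]; first by rewrite !big_nil ln_1.
rewrite !big_cons; case: (P i) => //.
rewrite mult_INR ln_mult ?IHs //; apply: INR_pos => //.
exact: prodn_gt0.
Qed.

End RealSums.

Lemma ln_le x y : 0 < x -> x <= y -> ln x <= ln y.
Proof. by move=> x_gt0 [/(ln_increasing _ _ x_gt0)/Rlt_le | ->] //; apply: Rle_refl. Qed.

Lemma ln_0 : ln 0 = 0.
Proof. by rewrite /ln; case: Rlt_dec => // lt00; case: (Rlt_irrefl _ lt00). Qed.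

Lemma ln_INR_ge0 (m : nat) : 0 <= ln (INR m).
Proof.
case: m => [|m]; first by rewrite ln_0; lra.
by rewrite -ln_1; apply: ln_le; [lra | apply: (le_INR 1)]; apply/leP.
Qed.

Lemma ln_le_subr1 x : 0 < x -> ln x <= x - 1.
Proof. by move=> x_gt0; have := exp_ineq1_le (ln x); rewrite exp_ln //; lra. Qed.

Lemma ln_succ_sub_le x : 0 < x -> x * (ln (x + 1) - ln x) <= 1.
Proof.
move=> x_gt0.
have := ln_le_subr1 ((x + 1) / x) ltac:(apply: Rdiv_lt_0_compat; lra).
rewrite /Rdiv ln_mult ?ln_Rinv; try apply: Rinv_0_lt_compat; try lra.
have -> : (x + 1) * / x - 1 = / x by field; lra.
move=> le_inv; rewrite -{2}(Rinv_r x); last lra.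
by apply: Rmult_le_compat_l; lra.
Qed.

Lemma ln_succ_sub_ge x : 0 < x -> 1 <= (x + 1) * (ln (x + 1) - ln x).
Proof.
move=> x_gt0.
have := ln_le_subr1 (x / (x + 1)) ltac:(apply: Rdiv_lt_0_compat; lra).
rewrite /Rdiv ln_mult ?ln_Rinv; try apply: Rinv_0_lt_compat; try lra.
have -> : x * / (x + 1) - 1 = - / (x + 1) by field; lra.
move=> le_inv; rewrite -{1}(Rinv_r (x + 1)); last lra.
by apply: Rmult_le_compat_l; lra.
Qed.

Lemma one_lt_ln3 : 1 < ln 3.
Proof.
(* (10/9)^10 < 3 and ln (10/9) >= 1 - 9/10 *)
have pow_lt_3 : (10 / 9) ^ 10 < 3 by simpl; lra.
have := ln_increasing ((10 / 9) ^ 10) 3 ltac:(apply: pow_lt; lra) pow_lt_3.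
have := ln_le_subr1 (9 / 10) ltac:(lra).
rewrite ln_pow; last lra.
have -> : 10 / 9 = / (9 / 10) by field.
rewrite ln_Rinv /=; lra.
Qed.

Lemma sqr_1_add_ln_le x : 1 <= x -> (1 + ln x) ^ 2 <= 4 * x.
Proof.
move=> x_ge1.
have sqrt_ge1 : 1 <= sqrt x by rewrite -sqrt_1; apply: sqrt_le_1_alt.
have sqrt_sqr : sqrt x * sqrt x = x by apply: sqrt_sqrt; lra.
have ln_ge0 : 0 <= ln x by rewrite -ln_1; apply: ln_le; lra.
have : ln x <= 2 * (sqrt x - 1).
  rewrite -{1}sqrt_sqr ln_mult; try lra.
  by have := ln_le_subr1 (sqrt x) ltac:(lra); lra.
set s := sqrt x in sqrt_ge1 sqrt_sqr *; set l := ln x in ln_ge0 *.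
move=> l_le /=; nra.
Qed.

Lemma ln_mul_1_add_ln_le x y : 1 <= x -> 2 * x <= y ->
  ln y * (1 + ln x) <= 8 * (x * (ln y - ln x)).
Proof.
move=> x_ge1 le_2x_y.
have ln_ge0 : 0 <= ln x by rewrite -ln_1; apply: ln_le; lra.
have gap_gt_half : / 2 < ln y - ln x.
  have := ln_le (2 * x) y ltac:(lra) le_2x_y.
  rewrite ln_mult; try lra.
  by have := ln_lt_2; lra.
(* With l = ln x and d = ln y - ln x > 1/2:
   ln y = l + d <= 2 d (1 + l) and (1 + l)^2 <= 4 x. *)
have := sqr_1_add_ln_le x x_ge1.
set l := ln x in ln_ge0 gap_gt_half *; set d := ln y - ln x in gap_gt_half *.
have -> : ln y = l + d by rewrite /d /l; ring.
have ln_y_le : l + d <= 2 * d * (1 + l) by nra.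
simpl; nra.
Qed.

Definition stirling_rem (m : nat) : R := ln (INR m`!) - (INR m * ln (INR m) - INR m).

Lemma stirling_rem0 : stirling_rem 0 = 0.
Proof. by rewrite /stirling_rem /= ln_1; ring. Qed.

Lemma stirling_remS m :
  stirling_rem m.+1 = stirling_rem m + 1 - INR m * (ln (INR m + 1) - ln (INR m)).
Proof.
rewrite /stirling_rem factS mult_INR ln_mult ?S_INR; first ring.
  by rewrite -S_INR; apply: INR_pos.
by apply: INR_pos; apply: fact_gt0.
Qed.

Lemma stirling_rem_nondecreasing :
  {homo stirling_rem : m k / (m <= k)%nat >-> m <= k}.
Proof.
apply: homo_leq => [x | y x z | m]; [exact: Rle_refl | exact: Rle_trans |].
rewrite stirling_remS; case: m => [|m]; first by rewrite Rmult_0_l; lra.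
by have := ln_succ_sub_le (INR m.+1) (INR_pos (ltn0Sn m)); lra.
Qed.

Lemma stirling_rem_le [m] : (0 < m)%nat -> stirling_rem m <= 1 + ln (INR m).
Proof.
case: m => // m _; elim: m => [|m IHm].
  by rewrite /stirling_rem /= ln_1; lra.
rewrite stirling_remS (S_INR m.+1).
by have := ln_succ_sub_ge (INR m.+1) (INR_pos (ltn0Sn m)); lra.
Qed.

Lemma stirling_rem_subadd m k :
  stirling_rem (m + k) <= stirling_rem m + stirling_rem k.
Proof.
case: (posnP m) => [-> | m_gt0]; first by rewrite stirling_rem0 add0n; lra.
case: (posnP k) => [-> | k_gt0]; first by rewrite stirling_rem0 addn0; lra.
have fact_pos j : 0 < INR j`! by apply/INR_pos/fact_gt0.
have bin_pos : 0 < INR 'C(m + k, m) by apply/INR_pos; rewrite bin_gt0 leq_addr.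
have expn_pos j : (0 < j)%nat -> 0 < INR (j ^ j).
  by move=> j_gt0; apply/INR_pos; rewrite expn_gt0 j_gt0.
have ln_bin :
    ln (INR 'C(m + k, m)) = ln (INR (m + k)`!) - ln (INR m`!) - ln (INR k`!).
  rewrite -(bin_fact (leq_addr k m)) addKn !mult_INR !ln_mult //; first ring.
  exact: Rmult_lt_0_compat.
have lhs_pos : 0 < INR ('C(m + k, m) * m ^ m * k ^ k).
  by rewrite !mult_INR; repeat apply: Rmult_lt_0_compat => //; exact: expn_pos.
have := ln_le _ _ lhs_pos (le_INR _ _ (elimT leP (bin_mul_expn_le m k))).
rewrite !mult_INR !ln_mult ?ln_bin ?ln_INR_expn ?addn_gt0 ?m_gt0 //;
  try (apply: Rmult_lt_0_compat => //); try exact: expn_pos.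
by rewrite /stirling_rem plus_INR; lra.
Qed.

Lemma stirling_rem_sum [I : Type] (r : seq I) (a : I -> nat) :
  stirling_rem (\sum_(i <- r) a i) <= \big[Rplus/0]_(i <- r) stirling_rem (a i).
Proof.
elim: r => [|i r IHr]; first by rewrite !big_nil stirling_rem0; lra.
rewrite !big_cons; apply: Rle_trans (stirling_rem_subadd _ _) _; lra.
Qed.

Lemma entropy_term_ge0 [b n : nat] : (b <= n)%nat ->
  0 <= INR b * (ln (INR n) - ln (INR b)).
Proof.
case: (posnP b) => [-> | b_gt0 le_bn]; first by rewrite Rmult_0_l; lra.
have := ln_le _ _ (INR_pos b_gt0) (le_INR _ _ (elimT leP le_bn)).
by have := INR_pos b_gt0; nra.
Qed.

Lemma stirling_rem_mul_ln_le (b n : nat) : (2 * b <= n)%nat ->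
  ln (INR n) * stirling_rem b <= 8 * (INR b * (ln (INR n) - ln (INR b))).
Proof.
case: (posnP b) => [-> _ | b_gt0 le_2b_n]; first by rewrite stirling_rem0 /=; lra.
have le_2b_n_R : 2 * INR b <= INR n.
  by have := le_INR _ _ (elimT leP le_2b_n); rewrite mult_INR /=; lra.
have := ln_mul_1_add_ln_le _ _ (le_INR 1 b (elimT leP b_gt0)) le_2b_n_R.
have := stirling_rem_le b_gt0; have := ln_INR_ge0 n; nra.
Qed.

Section EmpiricalEntropy.
Context {I : finType} (a : I -> nat).
Local Notation n := (\sum_i a i)%nat.

Definition scaled_entropy : R :=
  \big[Rplus/0]_i (INR (a i) * (ln (INR n) - ln (INR (a i)))).

Definition ln_multinomial : R :=
  ln (INR n`!) - \big[Rplus/0]_i ln (INR (a i)`!).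

Lemma scaled_entropy_sub_ln_multinomial :
  scaled_entropy - ln_multinomial = \big[Rplus/0]_i stirling_rem (a i) - stirling_rem n.
Proof.
rewrite /scaled_entropy /ln_multinomial /stirling_rem.
have -> : \big[Rplus/0]_i (INR (a i) * (ln (INR n) - ln (INR (a i)))) =
    \big[Rplus/0]_i (INR (a i) * ln (INR n)) - \big[Rplus/0]_i (INR (a i) * ln (INR (a i))).
  by rewrite -sumRB; apply: eq_bigr => i _; ring.
rewrite -Rmult_suml !sumRB -!INR_sum; ring.
Qed.

Lemma ln_multinomial_le_scaled_entropy : ln_multinomial <= scaled_entropy.
Proof.
have := stirling_rem_sum (index_enum I) a.
by have := scaled_entropy_sub_ln_multinomial; lra.
Qed.

Lemma ln_mul_entropy_gap_le :
  ln (INR n) * (scaled_entropy - ln_multinomial) <= 8 * scaled_entropy.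
Proof.
rewrite scaled_entropy_sub_ln_multinomial /scaled_entropy.
case: (pickP (@predT I)) => [i0 _ | I_empty]; last first.
  by rewrite !big_pred0 // stirling_rem0; lra.
have [imax _ max_imax] := arg_maxnP a (isT : predT i0).
(* hides the nat sum from the [bigD1] rewrites below *)
set N := n.
have le_max_N : (a imax <= N)%nat by rewrite /N (bigD1 imax) //= leq_addr.
have rem_max_le := Rmult_le_compat_l _ _ _ (ln_INR_ge0 N)
  (stirling_rem_nondecreasing _ _ le_max_N).
have term_max_ge0 := entropy_term_ge0 le_max_N.
have rest_le : ln (INR N) * \big[Rplus/0]_(i | i != imax) stirling_rem (a i) <=
    8 * \big[Rplus/0]_(i | i != imax) (INR (a i) * (ln (INR N) - ln (INR (a i)))).
  rewrite !Rmult_sumr; apply: Rle_sum => i neq_i_imax.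
  apply: stirling_rem_mul_ln_le.
  by apply: double_le_sum_max neq_i_imax => k; apply: max_imax.
rewrite (bigD1 imax) //= [X in _ <= 8 * X](bigD1 imax) //=.
rewrite Rmult_minus_distr_l Rmult_plus_distr_l; lra.
Qed.

Lemma ln_INR_multinomial_coef :
  ln (INR (n`! %/ \prod_i (a i)`!)) = ln_multinomial.
Proof.
have dvd_n := prod_fact_dvd_fact_sum (index_enum I) a.
have prod_gt0 : (0 < \prod_i (a i)`!)%nat by apply: prodn_gt0 => i; exact: fact_gt0.
rewrite /ln_multinomial -ln_INR_prod => [|i]; last exact: fact_gt0.
rewrite -{2}(divnK dvd_n) mult_INR ln_mult; [ring | apply: INR_pos.. ] => //.
by rewrite divn_gt0 //; apply: dvdn_leq (fact_gt0 _) dvd_n.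
Qed.

Lemma sum_entropy_terms : (0 < n)%nat ->
  \big[Rplus/0]_i (if a i == 0%nat then 0 else INR (a i) / INR n * ln (INR n / INR (a i)))
  = scaled_entropy / INR n.
Proof.
move=> n_gt0; rewrite /scaled_entropy /Rdiv Rmult_suml; apply: eq_bigr => i _.
case: (posnP (a i)) => [-> | a_gt0] /=; first ring.
have n_pos := INR_pos n_gt0; have a_pos := INR_pos a_gt0.
rewrite ln_mult ?ln_Rinv //; last exact: Rinv_0_lt_compat.
by field; lra.
Qed.

End EmpiricalEntropy.

Lemma counts_sum [gT : finGroupType] [G : {group gT}] [n] (chi : 'I_n -> Iirr G) :
  (\sum_i counts chi i)%nat = n.
Proof.
rewrite -[RHS]card_ord -sum1_card (partition_big chi predT) //=.
by apply: eq_bigr => i _; rewrite /counts -sum1_card; apply: eq_bigl => k; rewrite inE.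
Qed.

Lemma Sent_sub_Hent_bound [gT : finGroupType] [G : {group gT}] [n]
    (chi : 'I_n -> Iirr G) : (0 < n)%nat ->
  0 <= Sent chi - Hent chi /\ ln (INR n) * (Sent chi - Hent chi) <= 8 * Sent chi.
Proof.
move=> n_gt0; have n_pos := INR_pos n_gt0.
have sum_counts := counts_sum chi.
have eH : Hent chi = ln_multinomial (counts chi) / INR n.
  have := ln_INR_multinomial_coef (counts chi).
  by rewrite sum_counts /Hent /Rdiv Rmult_comm => ->.
have eS : Sent chi = scaled_entropy (counts chi) / INR n.
  have := sum_entropy_terms (counts chi).
  by rewrite sum_counts /Sent => /(_ n_gt0) ->.
have := ln_multinomial_le_scaled_entropy (counts chi).
have := ln_mul_entropy_gap_le (counts chi); rewrite sum_counts eH eS.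
set T := scaled_entropy _; set L := ln_multinomial _ => gap_le L_le_T.
have -> : T / INR n - L / INR n = (T - L) * / INR n by field; lra.
have inv_pos : 0 < / INR n by apply: Rinv_0_lt_compat.
split; first by apply: Rmult_le_pos; lra.
by rewrite -Rmult_assoc /Rdiv -Rmult_assoc; apply: Rmult_le_compat_r; lra.
Qed.

Lemma ln3_le_ln_INR [n : nat] : (3 <= n)%nat -> ln 3 <= ln (INR n).
Proof.
move=> n_ge3; apply: ln_le; first lra.
by have := le_INR 3 n (elimT leP n_ge3); rewrite /=; lra.
Qed.

Lemma le_lnln_ratio [L d s : R] : ln 3 <= L -> 0 <= d -> L * d <= 8 * s ->
  d <= 8 / ln (ln 3) * (ln L / L) * s.
Proof.
move=> L_ge d_ge0 Ld_le.
have lnln3_pos : 0 < ln (ln 3).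
  by rewrite -ln_1; apply: ln_increasing; [lra | exact: one_lt_ln3].
have L_pos : 0 < L by have := one_lt_ln3; lra.
have lnL_ge : ln (ln 3) <= ln L by apply: ln_le; have := one_lt_ln3; lra.
have d_le : d <= 8 * s / L by apply: (Rmult_le_reg_l L) => //; field_simplify; lra.
have ratio_ge1 : 1 <= ln L / ln (ln 3).
  by apply: (Rmult_le_reg_l (ln (ln 3))) => //; field_simplify; lra.
have -> : 8 / ln (ln 3) * (ln L / L) * s = 8 * s / L * (ln L / ln (ln 3)).
  by field; lra.
have : 0 <= 8 * s / L by lra.
nra.
Qed.

Close Scope R_scope.

Theorem lemma5p1 :
  exists C : R,
  forall (gT : finGroupType) (G : {group gT}) (n : nat),
    abelian G -> #|G| = n -> (3 <= n)%N ->
    forall chi : 'I_n -> Iirr G,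
      (/ (ln (INR n)) ^ 100 <= Hent chi)%R ->
      (Rabs (Hent chi - Sent chi)
         <= C * (ln (ln (INR n)) / ln (INR n)) * Sent chi)%R.
Proof.
exists (8 / ln (ln 3))%R => gT G n _ _ n_ge3 chi _.
have [gap_ge0 gap_le] := Sent_sub_Hent_bound chi (leq_trans (ltn0Sn 2) n_ge3).
rewrite Rabs_minus_sym Rabs_pos_eq //.
exact: le_lnln_ratio (ln3_le_ln_INR n_ge3) gap_ge0 gap_le.
Qed.
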